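(* For every $x\in X\setminus A$, the group $A\cap x^{-1}Ax$ has order not divisible by $q$; and for every $y\in X\setminus B$, the group $B\cap y^{-1}By$ has order not divisible by $p$.
   Context: Let $p$ and $q$ be distinct odd primes. Let $m$ be the smallest positive integer such that $p$ divides $|\mathrm{Sp}(2m,q)|$, and $n$ the smallest positive integer such that $q$ divides $|\mathrm{Sp}(2n,p)|$. Let $Q$ be an extraspecial $q$-group of order $q^{2m+1}$ and exponent $q$, and let $A = Q\rtimes\langle \alpha\rangle$ where $\alpha$ has order $p$, acts trivially on $Z(Q)$ and faithfully on $Q/Z(Q)$. Let $P$ be an extraspecial $p$-group of order $p^{2n+1}$ and exponent $p$, and let $B = P\rtimes\langle\beta\rangle$ where $\beta$ has order $q$, acts trivially on $Z(P)$ and faithfully on $P/Z(P)$. Then $C_A = Z(Q)\times\langle\alpha\rangle$ is a cyclic self-normalizing (nilpotent) subgroup of $A$ of order $pq$, and $C_B = Z(P)\times\langle \beta\rangle$ is a cyclic self-normalizing subgroup of $B$ of order $pq$. Let $X = A *_C B$ be the free product of $A$ and $B$ amalgamated along an isomorphism $C_A\to C_B$ (which necessarily maps $\langle\alpha\rangle$ onto $Z(P)$ and $Z(Q)$ onto $\langle\beta\rangle$); regard $A$, $B$ as subgroups of $X$ with $A\cap B = C = Z(P)\times Z(Q)$. *)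

From mathcomp Require Import all_boot all_fingroup all_solvable.
Set Implicit Arguments. Unset Strict Implicit. Unset Printing Implicit Defensive.
Local Open Scope group_scope.

(* Order of the symplectic group Sp(2n, q):  q^(n^2) * prod_{i=1}^n (q^(2i) - 1). *)
Definition sp_order (n q : nat) : nat :=
  (q ^ (n ^ 2) * \prod_(1 <= i < n.+1) (q ^ (2 * i) - 1))%N.

Definition least_sp_index (p q n : nat) : Prop :=
  (0 < n)%N /\ (p %| sp_order n q)%N /\
  (forall k, (0 < k)%N -> (k < n)%N -> ~~ (p %| sp_order k q)%N).

Definition is_group (G : Type) (mul : G -> G -> G) (inv : G -> G) (one : G) : Prop :=
  (forall x y z, mul x (mul y z) = mul (mul x y) z) /\
  (forall x, mul one x = x) /\
  (forall x, mul (inv x) x = one).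

Definition hom_on (gT : finGroupType) (D : {set gT}) (G : Type)
  (mul : G -> G -> G) (f : gT -> G) : Prop :=
  forall a b, a \in D -> b \in D -> f (a * b) = mul (f a) (f b).

(* G = Q x| <alpha>, with Q extraspecial of order r^(2n+1) and exponent r,
   alpha of order s acting trivially on Z(Q) and faithfully on Q/Z(Q). *)
Definition ext_semidirect (gT : finGroupType) (r s n : nat)
  (G Q : {group gT}) (alpha : gT) : Prop :=
  extraspecial Q /\ #|Q| = (r ^ (2 * n + 1))%N /\ exponent Q = r /\
      #[alpha] = s /\ Q ><| <[alpha]> = G /\
      alpha \in 'C('Z(Q)) /\
      (forall y, y \in <[alpha]> ->
         (forall x, x \in Q -> [~ x, y] \in 'Z(Q)) -> y = 1).

(* (X, iA, iB) is the free product of A and B amalgamated along the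
   isomorphism phi : CA -> CB, given by the universal property. *)
Definition is_amalgam (gA gB : finGroupType) (A : {group gA}) (B : {group gB})
  (CA : {group gA}) (phi : gA -> gB)
  (X : Type) (mulX : X -> X -> X) (invX : X -> X) (oneX : X)
  (iA : gA -> X) (iB : gB -> X) : Prop :=
  is_group mulX invX oneX /\
      hom_on A mulX iA /\ hom_on B mulX iB /\
      {in A &, injective iA} /\ {in B &, injective iB} /\
      (forall c, c \in CA -> iA c = iB (phi c)) /\
      (forall (G : Type) (mulG : G -> G -> G) (invG : G -> G) (oneG : G),
         is_group mulG invG oneG ->
         forall (fA : gA -> G) (fB : gB -> G),
           hom_on A mulG fA -> hom_on B mulG fB ->
           (forall c, c \in CA -> fA c = fB (phi c)) ->
           exists f : X -> G,
             [/\ (forall x y, f (mulX x y) = mulG (f x) (f y)),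
                 (forall a, a \in A -> f (iA a) = fA a),
                 (forall b, b \in B -> f (iB b) = fB b) &
                 (forall g : X -> G,
                    (forall x y, g (mulX x y) = mulG (g x) (g y)) ->
                    (forall a, a \in A -> g (iA a) = fA a) ->
                    (forall b, b \in B -> g (iB b) = fB b) ->
                    forall x, g x = f x)]).

(* Write C = Z(Q) x <alpha>, identified with Z(P) x <beta> inside X = A *_C B.
   Acting on reduced words shows that every element of X has a normal form, so an
   x outside A can be written a0 s w with a0 in A and s in B \ C the first letter.
   If A ∩ x^-1 A x contained an element of order q, there would be b, a in A of
   order q with b x = x a, and comparing normal forms forces b^a0 into C with
   s^-1 b^a0 s in C as well.  But an element of order q of Z(P) x <beta>
   generates <beta>, and by coprime action N_P(<beta>) = C_P(beta) = Z(P):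
   otherwise C_P(beta) would be a smaller extraspecial group whose order is
   congruent to |P| mod q, contradicting the minimality of n.  So s would lie in
   C.  The other half is symmetric. *)

From mathcomp Require Import all_boot all_fingroup all_solvable zify.
From Stdlib Require Import ClassicalEpsilon FunctionalExtensionality ProofIrrelevance Lia.
Set Implicit Arguments. Unset Strict Implicit. Unset Printing Implicit Defensive.
Local Open Scope group_scope.

Section AbstractGroup.
Variables (X : Type) (mulX : X -> X -> X) (invX : X -> X) (oneX : X).
Hypothesis Xgroup : is_group mulX invX oneX.

Lemma mulXA x y z : mulX x (mulX y z) = mulX (mulX x y) z.
Proof. by case: Xgroup. Qed.

Lemma mul1X x : mulX oneX x = x.
Proof. by case: Xgroup => _ []. Qed.

Lemma mulVX x : mulX (invX x) x = oneX.
Proof. by case: Xgroup => _ []. Qed.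

Lemma mulKX x y : mulX (invX x) (mulX x y) = y.
Proof. by rewrite mulXA mulVX mul1X. Qed.

Lemma mulXI x : injective (mulX x).
Proof. by move=> y z E; rewrite -(mulKX x y) E mulKX. Qed.

Lemma idemX_eq1 x : mulX x x = x -> x = oneX.
Proof. by move=> E; rewrite -(mulKX x x) E mulVX. Qed.

Lemma mulXV x : mulX x (invX x) = oneX.
Proof. by apply: idemX_eq1; rewrite -mulXA mulKX. Qed.

Lemma mulX1 x : mulX x oneX = x.
Proof. by rewrite -(mulVX x) mulXA mulXV mul1X. Qed.

Lemma mulKVX x y : mulX x (mulX (invX x) y) = y.
Proof. by rewrite mulXA mulXV mul1X. Qed.

Lemma mulIX x : injective (mulX^~ x).
Proof. by move=> y z E; rewrite -(mulX1 y) -(mulXV x) mulXA E -mulXA mulXV mulX1. Qed.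

Section HomOn.
Variables (gT : finGroupType) (G : {group gT}) (f : gT -> X).
Hypothesis fM : hom_on G mulX f.

Lemma hom_on1 : f 1 = oneX.
Proof. by apply: idemX_eq1; rewrite -fM ?mulg1. Qed.

Lemma hom_on_conj_order x g h : {in G &, injective f} -> g \in G -> h \in G ->
  mulX (f h) x = mulX x (f g) -> #[h] = #[g].
Proof.
move=> injf gG hG E.
have Ek k : mulX (f (h ^+ k)) x = mulX x (f (g ^+ k)).
  elim: k => [|k IHk]; first by rewrite !expg0 hom_on1 mul1X mulX1.
  by rewrite !expgS !fM ?groupX // -mulXA IHk mulXA E -mulXA.
have Eexp k : (g ^+ k == 1) = (h ^+ k == 1).
  apply/eqP/eqP => [gk1 | hk1]; apply: injf; rewrite ?groupX ?group1 //.
    by apply: (@mulIX x); rewrite Ek gk1 hom_on1 mul1X mulX1.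
  by apply: (@mulXI x); rewrite -Ek hk1 hom_on1 mul1X mulX1.
by apply/eqP; rewrite eqn_dvd !order_dvdn -Eexp expg_order Eexp expg_order !eqxx.
Qed.

End HomOn.
End AbstractGroup.

Record bijection (T : Type) := Bijection {
  bij_fun :> T -> T; bij_inv : T -> T;
  bij_funK : cancel bij_inv bij_fun; bij_invK : cancel bij_fun bij_inv }.

Section Bijections.
Variable T : Type.

Lemma bijection_eq (u v : bijection T) : u =1 v -> u = v.
Proof.
case: u v => f g fK gK [f' g' fK' gK'] /= /functional_extensionality Eff'.
subst f'; have Egg' : g = g'.
  by apply: functional_extensionality => x; rewrite -{1}(fK' x) gK.
by subst g'; rewrite (proof_irrelevance _ fK fK') (proof_irrelevance _ gK gK').
Qed.

Definition bijection_comp (u v : bijection T) : bijection T :=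
  Bijection (can_comp (bij_funK v) (bij_funK u)) (can_comp (bij_invK u) (bij_invK v)).
Definition bijection_rev (u : bijection T) : bijection T := Bijection (bij_invK u) (bij_funK u).
Definition bijection_id : bijection T := @Bijection T id id (fun _ => erefl) (fun _ => erefl).

Lemma bijection_group : is_group bijection_comp bijection_rev bijection_id.
Proof.
split; [|split] => [u v w | u | u]; apply: bijection_eq => //= x.
exact: bij_invK.
Qed.

End Bijections.

Section RcosetRepr.
Variables (gT : finGroupType) (C : {group gT}).

Lemma repr_rcoset_in (A : {group gT}) y :
  C \subset A -> y \in A -> repr (C :* y) \in A.
Proof.
by move=> sCA yA; case/rcosetP: (mem_repr_rcoset C y) => c cC ->; rewrite groupM // (subsetP sCA).
Qed.

Lemma mul_repr_rcosetV y : y * (repr (C :* y))^-1 \in C.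
Proof. by case/rcosetP: (mem_repr_rcoset C y) => c cC ->; rewrite invMg mulKVg groupV. Qed.

Lemma repr_rcoset_memC y : (repr (C :* y) \in C) = (y \in C).
Proof. by case/rcosetP: (mem_repr_rcoset C y) => c cC ->; rewrite groupMl. Qed.

Lemma repr_rcosetMl c y : c \in C -> repr (C :* (c * y)) = repr (C :* y).
Proof. by move=> cC; rewrite rcosetM rcoset_id. Qed.

End RcosetRepr.

Definition malnormal_at_order (gT : finGroupType) (G H : {set gT}) (k : nat) :=
  forall v g, v \in H -> #[v] = k -> g \in G -> v ^ g \in H -> g \in H.

Section AmalgamNormalForm.
Variables (gA gB : finGroupType) (A : {group gA}) (B : {group gB})
  (C : {group gA}) (phi : {morphism C >-> gB}).
Hypotheses (injphi : 'injm phi) (sCA : C \subset A) (sDB : phi @* C \subset B).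

Local Notation D := (phi @* C)%G.
Local Notation psi := (invm injphi).

Lemma psi_in y : y \in D -> psi y \in C.
Proof. by case/morphimP => c _ cC ->; rewrite invmE. Qed.

Lemma phi_in c : c \in C -> phi c \in D.
Proof. by move=> cC; rewrite mem_morphim. Qed.

Lemma C_subA c : c \in C -> c \in A.
Proof. exact: (subsetP sCA). Qed.

Lemma phi_inB c : c \in C -> phi c \in B.
Proof. by move=> cC; rewrite (subsetP sDB) ?phi_in. Qed.

Definition letterA (t : gA) := [&& t \in A, t \notin C & repr (C :* t) == t].
Definition letterB (s : gB) := [&& s \in B, s \notin D & repr (D :* s) == s].

Definition headA (l : seq (gA + gB)) := if l is inl _ :: _ then true else false.
Definition headB (l : seq (gA + gB)) := if l is inr _ :: _ then true else false.

Fixpoint reduced (l : seq (gA + gB)) : bool :=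
  match l with
  | [::] => true
  | inl t :: l' => [&& letterA t, ~~ headA l' & reduced l']
  | inr s :: l' => [&& letterB s, ~~ headB l' & reduced l']
  end.

(* A word (c, l) stands for c times the letters of l; it is normal when c lies
   in C and l alternates between the chosen right coset representatives of C in
   A and of phi(C) in B, avoiding the trivial cosets. *)
Definition word := (gA * seq (gA + gB))%type.
Definition normal_word (w : word) := (w.1 \in C) && reduced w.2.

Definition consA (y : gA) (l : seq (gA + gB)) : word :=
  if y \in C then (y, l) else (y * (repr (C :* y))^-1, inl (repr (C :* y)) :: l).
Definition consB (y : gB) (l : seq (gA + gB)) : word :=
  if y \in D then (psi y, l)
  else (psi (y * (repr (D :* y))^-1), inr (repr (D :* y)) :: l).

Definition actA (a : gA) (w : word) : word :=
  if w.2 is inl t :: l then consA (a * w.1 * t) l else consA (a * w.1) w.2.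
Definition actB (b : gB) (w : word) : word :=
  if w.2 is inr s :: l then consB (b * phi w.1 * s) l else consB (b * phi w.1) w.2.

Lemma consA_normal y l : y \in A -> reduced l -> ~~ headA l -> normal_word (consA y l).
Proof.
move=> yA red_l nhl; rewrite /consA /normal_word; case: ifP => yC /=; first by rewrite yC.
by rewrite mul_repr_rcosetV /letterA repr_rcoset_in // repr_rcoset_memC yC rcoset_repr eqxx nhl.
Qed.

Lemma consB_normal y l : y \in B -> reduced l -> ~~ headB l -> normal_word (consB y l).
Proof.
move=> yB red_l nhl; rewrite /consB /normal_word; case: ifP => yD /=; first by rewrite psi_in.
rewrite psi_in ?mul_repr_rcosetV // /letterB repr_rcoset_in //.
by rewrite repr_rcoset_memC yD rcoset_repr eqxx nhl.
Qed.

Lemma actA_normal a w : a \in A -> normal_word w -> normal_word (actA a w).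
Proof.
case: w => c l aA /andP [/= cC red_l]; rewrite /actA /=.
have acA : a * c \in A by rewrite groupM // C_subA.
case: l red_l => [|[t|s] l] red_l /=; try exact: consA_normal.
by move: red_l => /and3P [/and3P [tA _ _] nhl red_l]; rewrite consA_normal // groupM.
Qed.

Lemma actB_normal b w : b \in B -> normal_word w -> normal_word (actB b w).
Proof.
case: w => c l bB /andP [/= cC red_l]; rewrite /actB /=.
have bcB : b * phi c \in B by rewrite groupM // phi_inB.
case: l red_l => [|[t|s] l] red_l /=; try exact: consB_normal.
by move: red_l => /and3P [/and3P [sB _ _] nhl red_l]; rewrite consB_normal // groupM.
Qed.

Lemma actA_consA a y l : ~~ headA l -> actA a (consA y l) = consA (a * y) l.
Proof.
rewrite /consA; case: ifP => yC nhl; rewrite /actA /=; last by rewrite -mulgA mulgKV.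
by case: l nhl => [|[t|s] l].
Qed.

Lemma actB_consB b y l : ~~ headB l -> y \in B -> actB b (consB y l) = consB (b * y) l.
Proof.
rewrite /consB; case: ifP => yD nhl yB; rewrite /actB /=.
  by rewrite invmK //; case: l nhl => [|[t|s] l].
by rewrite invmK ?mul_repr_rcosetV // -mulgA mulgKV.
Qed.

Lemma actA_mul a1 a2 w : normal_word w -> actA a1 (actA a2 w) = actA (a1 * a2) w.
Proof.
case: w => c l /andP [/= cC red_l]; rewrite {2 3}/actA /=.
case: l red_l => [|[t|s] l] red_l /=; rewrite actA_consA ?mulgA //.
by case/and3P: red_l.
Qed.

Lemma actB_mul b1 b2 w : b2 \in B -> normal_word w -> actB b1 (actB b2 w) = actB (b1 * b2) w.
Proof.
case: w => c l b2B /andP [/= cC red_l]; rewrite {2 3}/actB /=.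
have b2cB : b2 * phi c \in B by rewrite groupM // phi_inB.
case: l red_l => [|[t|s] l] red_l /=; last move: red_l => /and3P [/and3P [sB _ _] nhl _].
all: by rewrite actB_consB ?groupM ?phi_inB //; rewrite !mulgA.
Qed.

Lemma actA1 w : normal_word w -> actA 1 w = w.
Proof.
case: w => c l /andP [/= cC red_l]; rewrite /actA /= mul1g /consA.
case: l red_l => [|[t|s] l] red_l /=; rewrite ?cC //.
case/and3P: red_l => /and3P [tA tC /eqP rt] _ _.
by rewrite groupMl // (negbTE tC) repr_rcosetMl // rt mulgK.
Qed.

Lemma actB1 w : normal_word w -> actB 1 w = w.
Proof.
case: w => c l /andP [/= cC red_l]; rewrite /actB /= mul1g /consB.
case: l red_l => [|[t|s] l] red_l /=; rewrite ?phi_in ?invmE //.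
case/and3P: red_l => /and3P [sB sD /eqP rs] _ _.
by rewrite groupMl ?phi_in // (negbTE sD) repr_rcosetMl ?phi_in // rs mulgK invmE.
Qed.

Lemma actA_phi c w : c \in C -> normal_word w -> actA c w = actB (phi c) w.
Proof.
case: w => c1 l cC /andP [/= c1C red_l]; rewrite /actA /actB /= /consA /consB.
have cc1 : c * c1 \in C by rewrite groupM.
case: l red_l => [|[t|s] l] red_l /=.
- by rewrite cc1 -morphM // phi_in // invmE.
- case/and3P: red_l => /and3P [tA tC /eqP rt] _ _.
  by rewrite -morphM // phi_in // invmE groupMl // (negbTE tC) repr_rcosetMl // rt mulgK.
- case/and3P: red_l => /and3P [sB sD /eqP rs] _ _.
  rewrite cc1 -morphM // groupMl ?phi_in // (negbTE sD) repr_rcosetMl ?phi_in //.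
  by rewrite rs mulgK invmE.
Qed.

Definition nword := {w : word | normal_word w}.

Lemma normal_nil : normal_word (1, [::]).
Proof. by rewrite /normal_word /= group1. Qed.

Definition nword_nil : nword := exist normal_word (1, [::]) normal_nil.

(* Elements outside A (resp. B) act trivially, which makes permA and permB total. *)
Definition actA_nw (a : gA) (w : nword) : nword :=
  insubd w (if a \in A then actA a (val w) else val w).
Definition actB_nw (b : gB) (w : nword) : nword :=
  insubd w (if b \in B then actB b (val w) else val w).

Lemma val_actA_nw a w : a \in A -> val (actA_nw a w) = actA a (val w).
Proof. by move=> aA; rewrite /actA_nw aA insubdK //; apply: actA_normal (valP w). Qed.

Lemma val_actB_nw b w : b \in B -> val (actB_nw b w) = actB b (val w).
Proof. by move=> bB; rewrite /actB_nw bB insubdK //; apply: actB_normal (valP w). Qed.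

Lemma actA_nwK a : cancel (actA_nw a^-1) (actA_nw a).
Proof.
move=> w; case aA: (a \in A); last by rewrite /actA_nw groupV aA !valKd.
by apply: val_inj; rewrite !val_actA_nw ?groupV // actA_mul ?(valP w) // mulgV actA1 ?(valP w).
Qed.

Lemma actB_nwK b : cancel (actB_nw b^-1) (actB_nw b).
Proof.
move=> w; case bB: (b \in B); last by rewrite /actB_nw groupV bB !valKd.
apply: val_inj; rewrite !val_actB_nw ?groupV //.
by rewrite actB_mul ?groupV ?(valP w) // mulgV actB1 ?(valP w).
Qed.

Lemma actA_nwVK a : cancel (actA_nw a) (actA_nw a^-1).
Proof. by have := actA_nwK a^-1; rewrite invgK. Qed.

Lemma actB_nwVK b : cancel (actB_nw b) (actB_nw b^-1).
Proof. by have := actB_nwK b^-1; rewrite invgK. Qed.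

Definition permA (a : gA) : bijection nword := Bijection (actA_nwK a) (actA_nwVK a).
Definition permB (b : gB) : bijection nword := Bijection (actB_nwK b) (actB_nwVK b).

Lemma permA_hom : hom_on A (@bijection_comp nword) permA.
Proof.
move=> a1 a2 a1A a2A; apply: bijection_eq => w /=; apply: val_inj.
by rewrite !val_actA_nw ?groupM // actA_mul // (valP w).
Qed.

Lemma permB_hom : hom_on B (@bijection_comp nword) permB.
Proof.
move=> b1 b2 b1B b2B; apply: bijection_eq => w /=; apply: val_inj.
by rewrite !val_actB_nw ?groupM // actB_mul // (valP w).
Qed.

Lemma permA_phi c : c \in C -> permA c = permB (phi c).
Proof.
move=> cC; apply: bijection_eq => w /=; apply: val_inj.
by rewrite val_actA_nw ?C_subA // val_actB_nw ?phi_inB // actA_phi // (valP w).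
Qed.

Variables (X : Type) (mulX : X -> X -> X) (invX : X -> X) (oneX : X)
  (iA : gA -> X) (iB : gB -> X).
Hypothesis amX : is_amalgam A B C phi mulX invX oneX iA iB.

Let Xgroup : is_group mulX invX oneX. Proof. by case: amX. Qed.
Let iA_hom : hom_on A mulX iA. Proof. by case: amX => _ []. Qed.
Let iB_hom : hom_on B mulX iB. Proof. by case: amX => _ [] _ []. Qed.
Let iA_phi c : c \in C -> iA c = iB (phi c).
Proof. by case: amX => _ [] _ [] _ [] _ [] _ [] + _; apply. Qed.

Lemma amalgam_acts_on_normal_words : exists th : X -> bijection nword,
  [/\ forall x y, th (mulX x y) = bijection_comp (th x) (th y),
      forall a, a \in A -> th (iA a) = permA a &
      forall b, b \in B -> th (iB b) = permB b].
Proof.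
case: amX => _ [] _ [] _ [] _ [] _ [] _ /(_ _ _ _ _ (bijection_group nword)).
by case/(_ _ _ permA_hom permB_hom permA_phi) => th [thM thA thB _]; exists th.
Qed.

Variable th : X -> bijection nword.
Hypotheses (thM : forall x y, th (mulX x y) = bijection_comp (th x) (th y))
  (thA : forall a, a \in A -> th (iA a) = permA a)
  (thB : forall b, b \in B -> th (iB b) = permB b).

Definition nf (x : X) : word := val (th x nword_nil).

Lemma nf_normal x : normal_word (nf x).
Proof. exact: valP. Qed.

Lemma nf1 : nf oneX = (1, [::]).
Proof.
have th1 : th oneX = bijection_id nword.
  by apply: (idemX_eq1 (bijection_group nword)); rewrite -thM (mul1X Xgroup).
by rewrite /nf th1.
Qed.

Lemma nf_mulA a y : a \in A -> nf (mulX (iA a) y) = actA a (nf y).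
Proof. by move=> aA; rewrite /nf thM thA //= val_actA_nw. Qed.

Lemma nf_mulB b y : b \in B -> nf (mulX (iB b) y) = actB b (nf y).
Proof. by move=> bB; rewrite /nf thM thB //= val_actB_nw. Qed.

Fixpoint letters_val (l : seq (gA + gB)) : X :=
  match l with
  | [::] => oneX
  | inl t :: l' => mulX (iA t) (letters_val l')
  | inr s :: l' => mulX (iB s) (letters_val l')
  end.

Definition word_val (w : word) : X := mulX (iA w.1) (letters_val w.2).

Lemma nf_letters l : reduced l -> nf (letters_val l) = (1, l).
Proof.
elim: l => [|[t|s] l IHl] /=; first by rewrite nf1.
- case/and3P => /and3P [tA tC /eqP rt] nhl red_l; rewrite nf_mulA // IHl //.
  have -> : actA t (1, l) = consA t l.
    by case: l nhl {IHl red_l} => [|[u|u] l] //= _; rewrite /actA /= mulg1.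
  by rewrite /consA (negbTE tC) rt mulgV.
- case/and3P => /and3P [sB sD /eqP rs] nhl red_l; rewrite nf_mulB // IHl //.
  have -> : actB s (1, l) = consB s l.
    by case: l nhl {IHl red_l} => [|[u|u] l] //= _; rewrite /actB /= morph1 mulg1.
  by rewrite /consB (negbTE sD) rs mulgV morph1.
Qed.

Lemma word_val_consA y l : y \in A -> word_val (consA y l) = mulX (iA y) (letters_val l).
Proof.
move=> yA; rewrite /consA /word_val; case: ifP => yC //=.
rewrite (mulXA Xgroup) -iA_hom ?mulgKV ?repr_rcoset_in //.
exact: C_subA (mul_repr_rcosetV C y).
Qed.

Lemma word_val_consB y l : y \in B -> word_val (consB y l) = mulX (iB y) (letters_val l).
Proof.
move=> yB; rewrite /consB /word_val; case: ifP => yD /=; first by rewrite iA_phi ?psi_in ?invmK.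
have yrD := mul_repr_rcosetV D y.
rewrite iA_phi ?psi_in // invmK // (mulXA Xgroup) -iB_hom ?mulgKV ?repr_rcoset_in //.
exact: (subsetP sDB).
Qed.

Lemma word_val_actA a w : a \in A -> normal_word w ->
  word_val (actA a w) = mulX (iA a) (word_val w).
Proof.
case: w => c l aA /andP [/= cC red_l]; rewrite {2}/word_val /actA /=.
have cA := C_subA cC; have acA : a * c \in A by rewrite groupM.
case: l red_l => [|[t|s] l] red_l /=.
- by rewrite word_val_consA // iA_hom // -(mulXA Xgroup).
- move: red_l => /and3P [/and3P [tA _ _] _ _].
  by rewrite word_val_consA ?groupM // !iA_hom ?groupM // -!(mulXA Xgroup).
- by rewrite word_val_consA // iA_hom // -(mulXA Xgroup).
Qed.

Lemma word_val_actB b w : b \in B -> normal_word w ->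
  word_val (actB b w) = mulX (iB b) (word_val w).
Proof.
case: w => c l bB /andP [/= cC red_l]; rewrite {2}/word_val /actB /= iA_phi //.
have cB := phi_inB cC; have bcB : b * phi c \in B by rewrite groupM.
case: l red_l => [|[t|s] l] red_l /=.
- by rewrite word_val_consB // iB_hom // -(mulXA Xgroup).
- by rewrite word_val_consB // iB_hom // -(mulXA Xgroup).
- move: red_l => /and3P [/and3P [sB _ _] _ _].
  by rewrite word_val_consB ?groupM // !iB_hom ?groupM // -!(mulXA Xgroup).
Qed.

Definition nf_exact (x : X) : bool :=
  if excluded_middle_informative (word_val (nf x) = x) then true else false.

Lemma nf_exactP x : reflect (word_val (nf x) = x) (nf_exact x).
Proof. by rewrite /nf_exact; case: excluded_middle_informative => ?; constructor. Qed.

Lemma nf_exact1 : nf_exact oneX.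
Proof. by apply/nf_exactP; rewrite nf1 /word_val (hom_on1 Xgroup iA_hom) (mul1X Xgroup). Qed.

Lemma nf_exact_mulA a y : a \in A -> nf_exact (mulX (iA a) y) = nf_exact y.
Proof.
move=> aA; apply/nf_exactP/nf_exactP; rewrite nf_mulA // word_val_actA ?nf_normal //.
  exact: (mulXI Xgroup).
by move->.
Qed.

Lemma nf_exact_mulB b y : b \in B -> nf_exact (mulX (iB b) y) = nf_exact y.
Proof.
move=> bB; apply/nf_exactP/nf_exactP; rewrite nf_mulB // word_val_actB ?nf_normal //.
  exact: (mulXI Xgroup).
by move->.
Qed.

Let lmulK z : cancel (fun p : X * bool => (mulX (invX z) p.1, p.2)) (fun p => (mulX z p.1, p.2)).
Proof. by case=> y e; rewrite /= (mulKVX Xgroup). Qed.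

Let lmulVK z : cancel (fun p : X * bool => (mulX z p.1, p.2)) (fun p => (mulX (invX z) p.1, p.2)).
Proof. by case=> y e; rewrite /= (mulKX Xgroup). Qed.

Definition lmul (z : X) : bijection (X * bool) := Bijection (lmulK z) (lmulVK z).

Lemma lmulM y z : lmul (mulX y z) = bijection_comp (lmul y) (lmul z).
Proof. by apply: bijection_eq => -[u e] /=; rewrite (mulXA Xgroup). Qed.

Definition flip_inexact (p : X * bool) : X * bool := (p.1, p.2 (+) ~~ nf_exact p.1).

Lemma flip_inexactK : involutive flip_inexact.
Proof. by case=> u e; rewrite /flip_inexact /= -addbA addbb addbF. Qed.

Definition flip_inexact_bij : bijection (X * bool) :=
  Bijection flip_inexactK flip_inexactK.

Definition twisted_lmul (z : X) : bijection (X * bool) :=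
  bijection_comp flip_inexact_bij (bijection_comp (lmul z) flip_inexact_bij).

(* The set of x with an exact normal form is stable under left multiplication by
   the generators, so twisting the left regular representation by the involution
   flipping the second coordinate outside this set still agrees with it on iA(A)
   and iB(B); uniqueness in the universal property then forces the set to be X. *)
Lemma nfK x : word_val (nf x) = x.
Proof.
case: amX => _ [] _ [] _ [] _ [] _ [] _ /(_ _ _ _ _ (bijection_group (X * bool))).
case/(_ (lmul \o iA) (lmul \o iB)) => [a1 a2 *|b1 b2 *|c cC|f [_ _ _ f_uniq]].
- by rewrite /= iA_hom // lmulM.
- by rewrite /= iB_hom // lmulM.
- by rewrite /= iA_phi.
have lmul_f : lmul =1 f by apply: f_uniq => //; apply: lmulM.
have twisted_f : twisted_lmul =1 f.
  apply: f_uniq => [y z | a aA | b bB]; apply: bijection_eq => -[u e] /=.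
  - by rewrite -addbA addbb addbF (mulXA Xgroup).
  - by rewrite /flip_inexact /= nf_exact_mulA // -addbA addbb addbF.
  - by rewrite /flip_inexact /= nf_exact_mulB // -addbA addbb addbF.
have := congr1 (fun u : bijection (X * bool) => u (oneX, false)) (lmul_f x).
rewrite -twisted_f /= /flip_inexact /= nf_exact1 /= (mulX1 Xgroup) => -[].
by case: (nf_exactP x).
Qed.

Lemma nf_iA g : g \in A -> nf (iA g) = consA g [::].
Proof. by move=> ginA; rewrite -[iA g](mulX1 Xgroup) nf_mulA // nf1 /actA /= mulg1. Qed.

Lemma outside_A_normal_form x : ~ (exists a0, a0 \in A /\ iA a0 = x) ->
  exists a0 s l, [/\ a0 \in A, reduced (inr s :: l)
                   & x = mulX (iA a0) (letters_val (inr s :: l))].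
Proof.
move=> x_notA; have := nfK x; have := nf_normal x.
case: (nf x) => c l /andP [/= cC red_l]; rewrite /word_val /= => Ex.
have cA := C_subA cC.
case: l red_l Ex => [|[t|s] l] red_l Ex; last by exists c, s, l.
  by case: x_notA; exists c; rewrite -Ex /= (mulX1 Xgroup).
move: red_l => /= /and3P [/and3P [tA _ _] + red_l].
case: l red_l Ex => [|[u|u] l] // red_l Ex _.
  by case: x_notA; exists (c * t); rewrite groupM // iA_hom // -Ex /= (mulX1 Xgroup).
by exists (c * t), u, l; rewrite groupM // iA_hom // -Ex -(mulXA Xgroup).
Qed.

Lemma headB_nf_mulA g l : g \in A -> reduced l ->
  headB (nf (mulX (letters_val l) (iA g))).2 = headB l.
Proof.
move=> ginA; elim: l => [|[t|s] l IHl] /=.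
- by rewrite (mul1X Xgroup) nf_iA // /consA; case: ifP.
- case/and3P => /and3P [tA tC _] nhl red_l; rewrite -(mulXA Xgroup) nf_mulA //.
  case: l nhl red_l IHl => [|[u|u] l] // _ red_l IHl.
    by rewrite /= (mul1X Xgroup) nf_iA // actA_consA // /consA; case: ifP.
  have := nf_normal (mulX (letters_val (inr u :: l)) (iA g)).
  move: (IHl red_l); case: (nf _) => c2 [|[v|v] l2] //= _ /andP [/= c2C _].
  rewrite /actA /consA /=; case: ifP => // tc2C.
  by rewrite (groupMr _ c2C) (negbTE tC) in tc2C.
- case/and3P => /and3P [sB sD _] nhl red_l; rewrite -(mulXA Xgroup) nf_mulB //.
  have := nf_normal (mulX (letters_val l) (iA g)).
  move: (IHl red_l); rewrite (negbTE nhl); case: (nf _) => c2 l2 /= nh2 /andP [/= c2C _].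
  have -> : actB s (c2, l2) = consB (s * phi c2) l2 by case: l2 nh2 => [|[v|v] l2].
  rewrite /consB; case: ifP => // sc2D.
  by rewrite (groupMr _ (phi_in c2C)) (negbTE sD) in sc2D.
Qed.

(* Write x = a0 s l in normal form.  Right multiplication by iA a keeps the first
   letter in the coset phi(C) s, so the normal form of (b^a0) s l can only match
   if b^a0 lies in C and phi(b^a0)^s lies in phi(C). *)
Lemma amalgam_commute_outside_A k : malnormal_at_order B D k ->
  forall x, ~ (exists a0, a0 \in A /\ iA a0 = x) ->
  forall a b, a \in A -> b \in A -> #[b] = k -> mulX (iA b) x <> mulX x (iA a).
Proof.
move=> Mk x x_notA a b aA bA ob Ebx.
have [a0 [s [l [a0A red_sl Ex]]]] := outside_A_normal_form x_notA.
move: (red_sl) => /= /and3P [/and3P [sB sD /eqP rs] nhl red_l].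
have b0A : b ^ a0 \in A by rewrite groupJ.
have Eb0 : mulX (iA (b ^ a0)) (letters_val (inr s :: l))
         = mulX (letters_val (inr s :: l)) (iA a).
  apply: (mulXI Xgroup (x := iA a0)); rewrite (mulXA Xgroup) -iA_hom // -conjgC.
  by rewrite iA_hom // -(mulXA Xgroup) -Ex Ebx Ex (mulXA Xgroup).
have := congr1 nf Eb0; rewrite nf_mulA // nf_letters //= -(mulXA Xgroup) nf_mulB //.
have := headB_nf_mulA aA red_l; rewrite (negbTE nhl).
have := nf_normal (mulX (letters_val l) (iA a)).
case: (nf _) => c2 l2 /andP [/= c2C _] nh2.
have -> : actB s (c2, l2) = consB (s * phi c2) l2 by case: l2 nh2 => [|[v|v] l2].
have sc2D : (s * phi c2 \in D) = false by rewrite groupMr ?phi_in // (negbTE sD).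
rewrite /actA /= mulg1 /consA /consB sc2D; case: ifP => // b0C [Eb0c Es _].
have Ephi : phi (b ^ a0) = s * phi c2 * s^-1.
  by rewrite Eb0c invmK ?mul_repr_rcosetV // -Es.
case/negP: sD; apply: (Mk (phi (b ^ a0))) => //; first exact: phi_in.
  by rewrite order_injm ?orderJ.
by rewrite Ephi /conjg mulgKV mulKg phi_in.
Qed.

End AmalgamNormalForm.

Lemma amalgam_cap_conj_ndvd (gA gB : finGroupType) (A : {group gA}) (B : {group gB})
    (C : {group gA}) (phi : {morphism C >-> gB})
    (X : Type) (mulX : X -> X -> X) (invX : X -> X) (oneX : X)
    (iA : gA -> X) (iB : gB -> X) (k : nat) :
    'injm phi -> C \subset A -> phi @* C \subset B ->
    is_amalgam A B C phi mulX invX oneX iA iB ->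
    prime k -> malnormal_at_order B (phi @* C) k ->
  forall x : X, ~ (exists a, a \in A /\ iA a = x) ->
  forall H : {group gA},
    (forall a, a \in H <->
       (a \in A /\ exists b, b \in A /\ iA a = mulX (invX x) (mulX (iA b) x))) ->
  ~~ (k %| #|H|)%N.
Proof.
move=> injphi sCA sDB amX k_pr Mk x x_notA H defH.
have [Xgroup [iA_hom [_ [iA_inj _]]]] := amX.
apply/negP => /(Cauchy k_pr) [a aH oa].
have [aA [b [bA Ea]]] := (defH a).1 aH.
have Ebx : mulX (iA b) x = mulX x (iA a) by rewrite Ea (mulKVX Xgroup).
have [th [thM thA thB]] := amalgam_acts_on_normal_words injphi sCA sDB amX.
apply: (amalgam_commute_outside_A amX thM thA thB Mk x_notA aA bA _ Ebx).
by rewrite (hom_on_conj_order Xgroup iA_hom iA_inj aA bA Ebx).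
Qed.

Lemma amalgam_sym (gA gB : finGroupType) (A : {group gA}) (B : {group gB})
    (C : {group gA}) (phi : {morphism C >-> gB}) (injphi : 'injm phi)
    (X : Type) (mulX : X -> X -> X) (invX : X -> X) (oneX : X)
    (iA : gA -> X) (iB : gB -> X) :
  is_amalgam A B C phi mulX invX oneX iA iB ->
  is_amalgam B A (phi @* C)%G (invm injphi) mulX invX oneX iB iA.
Proof.
case=> Xgroup [iA_hom [iB_hom [iA_inj [iB_inj [iA_phi univ]]]]].
do 6!split=> //.
  by move=> _ /morphimP [c _ cC ->]; rewrite invmE // iA_phi.
move=> G mulG invG oneG Ggroup fB fA fB_hom fA_hom fBA.
have fAB c : c \in C -> fA c = fB (phi c) by move=> cC; rewrite fBA ?mem_morphim ?invmE.
have [f [fM f_iA f_iB f_uniq]] := univ G mulG invG oneG Ggroup fA fB fA_hom fB_hom fAB.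
by exists f; split=> // g gM g_iB g_iA; apply: f_uniq.
Qed.

Lemma least_sp_index_ndvd s r n k : least_sp_index s r n -> (0 < k < n)%N ->
  ~~ (s %| r ^ (2 * k) - 1)%N.
Proof.
case=> _ [_ n_min] /andP [k_gt0 lt_kn]; apply: contra _ (n_min k k_gt0 lt_kn).
by rewrite /sp_order big_nat_recr //= => dvd_s; rewrite dvdn_mull // dvdn_mull.
Qed.

Lemma dvdn_expn_sub1_of_mod s r c n : (0 < r)%N -> coprime s r -> (c < n)%N ->
  r ^ (2 * n + 1) = r ^ c.*2.+1 %[mod s] -> (s %| r ^ (2 * (n - c)) - 1)%N.
Proof.
move=> r_gt0 co_sr lt_cn.
have -> : (2 * n + 1 = c.*2.+1 + 2 * (n - c))%N by lia.
rewrite expnD => /eqP; rewrite eqn_mod_dvd ?leq_pmulr ?expn_gt0 ?r_gt0 //.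
by rewrite -{2}(muln1 (r ^ c.*2.+1)%N) -mulnBr Gauss_dvdr // coprimeXr.
Qed.

Section ExtraspecialSemidirect.
Variables (gT : finGroupType) (r s n : nat) (G Q : {group gT}) (alpha : gT).
Hypotheses (r_pr : prime r) (s_pr : prime s) (r_neq_s : r != s).
Hypotheses (extG : ext_semidirect r s n G Q alpha) (n_least : least_sp_index s r n).

Local Notation K := 'C_Q(<[alpha]>).

Let esQ : extraspecial Q. Proof. by case: extG. Qed.
Let cardQ : #|Q| = (r ^ (2 * n + 1))%N. Proof. by case: extG => _ []. Qed.
Let expQ : exponent Q = r. Proof. by case: extG => _ [] _ []. Qed.
Let sdQA : Q ><| <[alpha]> = G. Proof. by case: extG => _ [] _ [] _ [] _ []. Qed.
Let alpha_centZ : alpha \in 'C('Z(Q)). Proof. by case: extG => _ [] _ [] _ [] _ [] _ []. Qed.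
Let alpha_faithful y : y \in <[alpha]> ->
  (forall x, x \in Q -> [~ x, y] \in 'Z(Q)) -> y = 1.
Proof. by case: extG => _ [] _ [] _ [] _ [] _ [] _; apply. Qed.

Let rQ : r.-group Q. Proof. by rewrite /pgroup cardQ pnatX pnat_id. Qed.
Let card_alpha : #|<[alpha]>| = s. Proof. by case: extG => _ [] _ [] _ [] <- _; rewrite -orderE. Qed.
Let co_sr : coprime s r. Proof. by rewrite prime_coprime // dvdn_prime2 // eq_sym. Qed.
Let coQA : coprime #|Q| #|<[alpha]>|.
Proof. by rewrite cardQ card_alpha coprimeXl // coprime_sym. Qed.
Let nQA : <[alpha]> \subset 'N(Q). Proof. by case/sdprodP: sdQA. Qed.
Let sKQ : K \subset Q. Proof. exact: subsetIl. Qed.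

Lemma center_sub_cent_cycle : 'Z(Q) \subset K.
Proof. by rewrite subsetI center_sub centsC cycle_subG alpha_centZ. Qed.

(* Coprime action gives Q = [Q, alpha] C_Q(alpha), and [Q, alpha] commutes with
   C_Q(alpha) by the three subgroup lemma. *)
Lemma center_cent_cycle : 'Z(K) = 'Z(Q).
Proof.
pose D := [~: Q, <[alpha]>].
have sDQ : D \subset Q by rewrite commg_subl.
have cDK : D \subset 'C(K).
  apply/commG1P/three_subgroup.
    have -> : [~: <[alpha]>, K] = 1 by apply/commG1P; rewrite centsC subsetIr.
    exact: comm1G.
  apply/commG1P; rewrite commGC; apply: subset_trans (commgS Q sKQ) _.
  by rewrite -derg1; case: esQ => [[_ ->]] _; rewrite centsC cycle_subG.
have sQDK : Q \subset D * K.
  rewrite -quotientSK ?commg_norml //.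
  rewrite (coprime_quotient_cent sDQ (commg_normr _ _) coQA (pgroup_sol rQ)).
  by rewrite subsetI subxx quotient_cents2r.
apply/eqP; rewrite eqEsubset; apply/andP; split.
  rewrite subsetI (subset_trans (center_sub K) sKQ) centsC.
  apply: subset_trans sQDK _.
  by rewrite mulG_subG (subset_trans cDK (centS (center_sub _))) /= centsC subsetIr.
by rewrite subsetI center_sub_cent_cycle (subset_trans (subsetIr Q _) (centS sKQ)).
Qed.

Lemma cent_cycle_extraspecial : K != 'Z(Q) -> extraspecial K.
Proof.
move=> neKZ; have [[PhiQ derQ] pZ] := esQ.
have nabK : ~~ abelian K.
  by apply: contra neKZ => /center_idP {1}<-; rewrite center_cent_cycle.
have derK : K^`(1) = 'Z(Q).
  have sK'Z : K^`(1) \subset 'Z(Q) by rewrite -derQ dergS.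
  apply/eqP; rewrite eqEcard sK'Z /=.
  have ntK' : #|K^`(1)| != 1%N by apply: contra nabK; rewrite -trivg_card1 => /eqP/derG1P.
  by rewrite (prime_nt_dvdP pZ ntK' (cardSg sK'Z)).
have PhiK : 'Phi(K) = 'Z(Q).
  apply/eqP; rewrite eqEsubset -{1}PhiQ (PhiS rQ sKQ) -derK.
  by rewrite (Phi_joing (pgroupS sKQ rQ)) joing_subl.
by split; [split|]; rewrite center_cent_cycle.
Qed.

Lemma card_cent_cycle_mod : #|Q| = #|K| %[mod s].
Proof.
have sA : s.-group <[alpha]> by rewrite /pgroup card_alpha pnat_id.
have actsQ : [acts <[alpha]>, on Q | 'J] by rewrite astabsJ.
by have := pgroup_fix_mod sA actsQ; rewrite afixJ.
Qed.

Lemma cent_cycle_proper : K \proper Q.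
Proof.
rewrite properEneq sKQ andbT; apply/eqP => EKQ.
have alpha1 : alpha = 1.
  apply: alpha_faithful (cycle_id _) _ => x xQ.
  have : x \in K by rewrite EKQ.
  by rewrite inE cent_cycle => /andP [_ /cent1P/commgP/eqP ->]; apply: group1.
by move: s_pr; rewrite -card_alpha alpha1 cycle1 cards1.
Qed.

(* Otherwise C_Q(alpha) would be a smaller extraspecial group of order
   r^(2c+1) with |Q| = |C_Q(alpha)| mod s, so s would divide r^(2(n-c)) - 1. *)
Lemma cent_cycle_center : K = 'Z(Q).
Proof.
apply/eqP; apply/negPn/negP => neKZ.
have [c c_gt0 cardK] := card_extraspecial (pgroupS sKQ rQ) (cent_cycle_extraspecial neKZ).
have lt_cn : (c < n)%N.
  move: (proper_card cent_cycle_proper).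
  by rewrite cardK cardQ ltn_exp2l ?prime_gt1 // addn1 ltnS mul2n ltn_double.
have mod_eq : r ^ (2 * n + 1) = r ^ c.*2.+1 %[mod s].
  by rewrite -cardQ -cardK card_cent_cycle_mod.
have k_bounds : (0 < n - c < n)%N by apply/andP; split; lia.
case/negP: (least_sp_index_ndvd n_least k_bounds).
exact: dvdn_expn_sub1_of_mod (prime_gt0 r_pr) co_sr lt_cn mod_eq.
Qed.

Lemma center_join_cycle : 'Z(Q) <*> <[alpha]> = 'Z(Q) * <[alpha]>.
Proof. by rewrite cent_joinEr // cycle_subG alpha_centZ. Qed.

Lemma order_s_mem_cycle w : w \in 'Z(Q) <*> <[alpha]> -> #[w] = s -> w \in <[alpha]>.
Proof.
rewrite center_join_cycle => /mulsgP [z y zZ yA ->] ozy.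
have czy : commute z y.
  have : y \in 'C('Z(Q)) by rewrite (subsetP _ y yA) // cycle_subG.
  by move/centP => /(_ z zZ).
have zs1 : z ^+ s = 1.
  by have := expg_order (z * y); rewrite ozy expgMn // -card_alpha (expg_cardG yA) mulg1.
have zr1 : z ^+ r = 1 by rewrite -expQ expg_exponent // (subsetP (center_sub Q)).
have : (#[z] %| gcdn s r)%N by rewrite dvdn_gcd !order_dvdn zs1 zr1 !eqxx.
by rewrite (eqnP co_sr) dvdn1 order_eq1 => /eqP ->; rewrite mul1g.
Qed.

Let cycle_of_order_s w : w \in <[alpha]> -> #[w] = s -> <[w]> = <[alpha]>.
Proof. by move=> wA ow; apply/eqP; rewrite eqEcard cycle_subG wA card_alpha -orderE ow /=. Qed.

Lemma ext_semidirect_malnormal : malnormal_at_order G ('Z(Q) <*> <[alpha]>) s.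
Proof.
move=> v g vC ov gG vgC.
have vA := order_s_mem_cycle vC ov.
have vgA := order_s_mem_cycle vgC (etrans (orderJ v g) ov).
have nAg : g \in 'N(<[alpha]>).
  apply/normP.
  by rewrite -{1}(cycle_of_order_s vA ov) -cycleJ cycle_of_order_s // orderJ.
have [_ defG _ _] := sdprodP sdQA.
move: gG nAg; rewrite -defG => /mulsgP [y a yQ aA ->].
rewrite groupMr ?(subsetP (normG _) a aA) // => nAy.
have : y \in 'N_Q(<[alpha]>) by rewrite inE yQ.
by rewrite (coprime_norm_cent nQA coQA) cent_cycle_center center_join_cycle => yZ; rewrite mem_mulg.
Qed.

End ExtraspecialSemidirect.

Lemma ext_semidirect_join_sub (gT : finGroupType) r s n (G Q : {group gT}) alpha :
  ext_semidirect r s n G Q alpha -> 'Z(Q) <*> <[alpha]> \subset G.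
Proof.
case=> _ [_ [_ [_ [/sdprodP [_ defG _ _] _]]]].
by rewrite join_subG -defG (subset_trans (center_sub Q) (mulG_subl _ _)) mulG_subr.
Qed.

Unset Implicit Arguments.
Theorem mainTheorem6
  (p q m n : nat)
  (gA gB : finGroupType)
  (A Q : {group gA}) (alpha : gA)
  (B P : {group gB}) (beta : gB)
  (phi : {morphism ('Z(Q) <*> <[alpha]>)%G >-> gB})
  (X : Type) (mulX : X -> X -> X) (invX : X -> X) (oneX : X)
  (iA : gA -> X) (iB : gB -> X) :
  prime p -> prime q -> odd p -> odd q -> p != q ->
  least_sp_index p q m ->
  least_sp_index q p n ->
  ext_semidirect q p m A Q alpha ->
  ext_semidirect p q n B P beta ->
  isom ('Z(Q) <*> <[alpha]>) ('Z(P) <*> <[beta]>) phi ->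
  is_amalgam A B ('Z(Q) <*> <[alpha]>)%G phi mulX invX oneX iA iB ->
  (forall x : X, ~ (exists a, a \in A /\ iA a = x) ->
     forall H : {group gA},
       (forall a, a \in H <->
          (a \in A /\ exists b, b \in A /\
             iA a = mulX (invX x) (mulX (iA b) x))) ->
       ~~ (q %| #|H|)%N) /\
  (forall y : X, ~ (exists b, b \in B /\ iB b = y) ->
     forall H : {group gB},
       (forall b, b \in H <->
          (b \in B /\ exists c, c \in B /\
             iB b = mulX (invX y) (mulX (iB c) y))) ->
       ~~ (p %| #|H|)%N).
Proof.
move=> p_pr q_pr _ _ p_neq_q m_least n_least extA extB iso_phi amX.
have [injphi im_phi] := isomP iso_phi.
have sCA := ext_semidirect_join_sub extA.
have sDB : phi @* ('Z(Q) <*> <[alpha]>) \subset B.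
  by rewrite im_phi (ext_semidirect_join_sub extB).
split.
  apply: (amalgam_cap_conj_ndvd injphi sCA sDB amX q_pr); rewrite im_phi.
  exact: ext_semidirect_malnormal p_pr q_pr p_neq_q extB n_least.
apply: (amalgam_cap_conj_ndvd (injm_invm injphi) sDB _ (amalgam_sym injphi amX) p_pr);
  rewrite im_invm //.
by apply: ext_semidirect_malnormal q_pr p_pr _ extA m_least; rewrite eq_sym.
Qed.
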